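(* Let $(W,\omega^W)$ be a vertex operator algebra and $\omega^1,\omega^2\in\operatorname{Sc}(W,\omega^W)$. If there exists a semi-conformal subalgebra $(U,\omega^2)$ of $(W,\omega^W)$ with $\omega^1\in U$, then $C_W(C_W(\langle\omega^1\rangle))\subseteq C_W(C_W(\langle\omega^2\rangle))$.
   Context: A semi-conformal subalgebra $(U,\omega')$ of a vertex operator algebra $(W,\omega^W)$ is a vertex subalgebra $U$ with a vector $\omega'\in U$ making it a vertex operator algebra such that $\omega^W_n|_U=\omega'_n|_U$ for all $n\ge 0$; $\omega'$ is then a semi-conformal vector, and $\operatorname{Sc}(W,\omega^W)$ is the set of these. $C_W(U)=\{v\in W: u_nv=0\ \forall u\in U,\ n\ge0\}$ is the commutant, and $\langle\omega'\rangle$ is the vertex subalgebra generated by $\omega'$ and $\mathbf 1$. *)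

(* Vertex operator algebras are developed from scratch here,
   following the Frenkel–Lepowsky–Meurman / Lepowsky–Li definition, with the
   Jacobi identity written in its component (Borcherds) form. *)
From HB Require Import structures.
From mathcomp Require Import all_boot all_order all_algebra.
Set Implicit Arguments. Unset Strict Implicit. Unset Printing Implicit Defensive.
Import Order.TTheory GRing.Theory Num.Theory.
Local Open Scope ring_scope.

Definition zbinom (p : int) (i : nat) : int :=
  match p with
  | Posz m => ('C(m, i))%:Z
  | Negz m => (-1) ^+ i * ('C(m + i, i))%:Z   (* Negz m = -(m+1) *)
  end.

Section VOA.
Variables (F : numClosedFieldType) (W : lmodType F).
(* Y u n v  is the mode  u_n v  (coefficient of z^{-n-1} in Y(u,z)v) *)
Variable Y : W -> int -> W -> W.
Variable one : W.

Definition subspace (P : W -> Prop) : Prop :=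
  P 0 /\ forall (a : F) u v, P u -> P v -> P (a *: u + v).

Definition vertex_subalgebra (P : W -> Prop) : Prop :=
  subspace P /\ P one /\ forall u v (n : int), P u -> P v -> P (Y u n v).

Definition is_VOA (P : W -> Prop) (om : W) : Prop :=
  let L (n : int) := Y om (n + 1) in
  vertex_subalgebra P /\ P om /\
  (forall (a : F) u u' v (n : int), P u -> P u' -> P v ->
      Y (a *: u + u') n v = a *: Y u n v + Y u' n v) /\
  (forall (a : F) u v v' (n : int), P u -> P v -> P v' ->
      Y u n (a *: v + v') = a *: Y u n v + Y u n v') /\
  (forall u v, P u -> P v -> exists N : int, forall n : int, N <= n -> Y u n v = 0) /\
  (forall v (n : int), P v -> Y one n v = if n == -1 then v else 0) /\
  (forall v, P v -> Y v (-1) one = v /\ forall n : nat, Y v n%:Z one = 0) /\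
  (* Jacobi identity, in components (sums are finite by truncation) *)
  (forall u v w (p q r : int), P u -> P v -> P w ->
     exists N : nat, forall M : nat, (N <= M)%N ->
       \sum_(i < M) (zbinom p i)%:~R *: Y (Y u (r + i%:Z) v) (p + q - i%:Z) w
       = \sum_(i < M) ((-1) ^+ i * (zbinom r i)%:~R) *:
            (Y u (p + r - i%:Z) (Y v (q + i%:Z) w)
             - ((-1 : F) ^ r) *: Y v (q + r - i%:Z) (Y u (p + i%:Z) w))) /\
  (exists c : F, forall (m n : int) v, P v ->
     L m (L n v) - L n (L m v) =
       (m - n)%:~R *: L (m + n) v
       + (if m + n == 0 then (((m ^+ 3 - m)%:~R / 12%:R) * c) *: v else 0)) /\
  (forall v w (n : int), P v -> P w -> Y (L (-1) v) n w = - (n%:~R *: Y v (n - 1) w)) /\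
  (forall v, P v -> exists (k : nat) (ns : 'I_k -> int) (ws : 'I_k -> W),
      (forall i, P (ws i) /\ L 0 (ws i) = (ns i)%:~R *: ws i) /\
      v = \sum_(i < k) ws i) /\
  (forall n : int, exists (k : nat) (b : 'I_k -> W), (forall i, P (b i)) /\
      forall v, P v -> L 0 v = n%:~R *: v ->
        exists c : 'I_k -> F, v = \sum_(i < k) c i *: b i) /\
  (exists N : int, forall (n : int) v, P v -> n < N -> L 0 v = n%:~R *: v -> v = 0).

Variable omW : W.

Definition semiconformal_subalgebra (U : W -> Prop) (om' : W) : Prop :=
  vertex_subalgebra U /\ U om' /\ is_VOA U om' /\
  forall (n : nat) u, U u -> Y omW n%:Z u = Y om' n%:Z u.

Definition semiconformal_vector (om' : W) : Prop :=
  exists U, semiconformal_subalgebra U om'.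

Definition commutant (S : W -> Prop) : W -> Prop :=
  fun v => forall u, S u -> forall n : nat, Y u n%:Z v = 0.

Definition generated (om' : W) : W -> Prop :=
  fun v => forall S, vertex_subalgebra S -> S om' -> S v.

End VOA.

(* If [om] is the conformal vector of a semi-conformal subalgebra [U], then
   [om_0] agrees with [L(-1)] on [U].  For [x] killed by [om_0], the commutator
   formula for zero modes gives [(L(-1) u)_(m+1) x = 0], i.e. [(m+1) u_m x = 0]
   by the [L(-1)]-derivative property; descending from the truncation bound,
   every nonnegative mode of [u] kills [x].  So [ker om_0] lies in [C_W(U)].
   Applied to [om2], whose zero mode kills [C_W(<om2>)], this gives
   [C_W(<om2>) <= C_W(U) <= C_W(<om1>)], and taking commutants reverses the
   inclusion. *)
From HB Require Import structures.
From mathcomp Require Import all_boot all_order all_algebra.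
Import Order.TTheory GRing.Theory Num.Theory.
Set Implicit Arguments.
Unset Strict Implicit.
Unset Printing Implicit Defensive.
Local Open Scope ring_scope.

Lemma descending_nat_ind (P : nat -> Prop) (N : nat) :
  (forall n, (N <= n)%N -> P n) -> (forall n, P n.+1 -> P n) -> forall n, P n.
Proof.
move=> PN Pdown n; suff: forall k m, (N <= m + k)%N -> P m by apply; apply: leq_addl.
elim=> [|k IHk] m le_Nmk; first by apply: PN; rewrite addn0 in le_Nmk.
by apply/Pdown/IHk; rewrite addSnnS.
Qed.

Lemma commutantS (F : numClosedFieldType) (W : lmodType F)
    (Y : W -> int -> W -> W) (S T : W -> Prop) (v : W) :
  (forall u, S u -> T u) -> commutant Y T v -> commutant Y S v.
Proof. by move=> sST Tv u /sST; apply: Tv. Qed.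

Section ZeroModes.
Variables (F : numClosedFieldType) (W : lmodType F).
Variables (Y : W -> int -> W -> W) (one omW : W).
Hypothesis HW : is_VOA Y one (fun _ => True) omW.

Lemma Yr0 (a : W) (n : int) : Y a n 0 = 0.
Proof.
have [_ [_ [_ [linY _]]]] := HW.
have := linY 1 a 0 0 n I I I; rewrite !scale1r addr0 => /esym.
by rewrite -[X in _ = X]addr0 => /addrI.
Qed.

Lemma truncation_nat (u x : W) :
  exists N : nat, forall n : nat, (N <= n)%N -> Y u n%:Z x = 0.
Proof.
have [_ [_ [_ [_ [truncY _]]]]] := HW.
have [N YN] := truncY u x I I; exists `|N|%N => n le_Nn; apply: YN.
by rewrite (le_trans (ler_norm N)) // abszE lez_nat.
Qed.

(* The Jacobi identity with [p = r = 0]: only the [i = 0] terms survive. *)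
Lemma zero_mode_commutator (a u w : W) (q : int) :
  Y (Y a 0 u) q w = Y a 0 (Y u q w) - Y u q (Y a 0 w).
Proof.
have [_ [_ [_ [_ [_ [_ [_ [jacobiY _]]]]]]]] := HW.
have [N jacN] := jacobiY a u w 0 q 0 I I I.
have := jacN N.+1 (leqnSn N).
rewrite !big_ord_recl !big1 => [|i _|i _]; rewrite /= ?bin0n ?mulr0 ?scale0r //.
by rewrite eqxx expr0 mul1r expr0z !scale1r ?addr0 ?add0r ?subr0.
Qed.

Lemma L_m1_mode (u x : W) (n : int) :
  Y (Y omW 0 u) n x = - (n%:~R *: Y u (n - 1) x).
Proof. by have [_ [_ [_ [_ [_ [_ [_ [_ [_ [derY _]]]]]]]]]] := HW; apply: derY. Qed.

Lemma kernel_zero_mode_sub_commutant (U : W -> Prop) (om x : W) :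
  semiconformal_subalgebra Y one omW U om -> Y om 0 x = 0 -> commutant Y U x.
Proof.
move=> [_ [_ [_ scU]]] om0x u Uu.
have down m : Y u m.+1%:Z x = 0 -> Y u m%:Z x = 0.
  move=> umx.
  have : Y (Y omW 0 u) m.+1%:Z x = 0.
    by rewrite (scU 0%N) // zero_mode_commutator umx om0x !Yr0 subr0.
  rewrite L_m1_mode; have -> : m.+1%:Z - 1 = m%:Z by rewrite -addn1 PoszD addrK.
  by move/eqP; rewrite oppr_eq0 scaler_eq0 pnatr_eq0 /= => /eqP.
have [N uNx] := truncation_nat u x.
exact: descending_nat_ind uNx down.
Qed.

End ZeroModes.

Theorem lemma2p5 (F : numClosedFieldType) (W : lmodType F)
  (Y : W -> int -> W -> W) (one omW : W)
  (HW : is_VOA Y one (fun _ => True) omW)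
  (om1 om2 : W)
  (H1 : semiconformal_vector Y one omW om1)
  (H2 : semiconformal_vector Y one omW om2)
  (HU : exists U, semiconformal_subalgebra Y one omW U om2 /\ U om1) :
  forall v, commutant Y (commutant Y (generated Y one om1)) v ->
            commutant Y (commutant Y (generated Y one om2)) v.
Proof.
case: HU => U [scU Uom1] v C1v; apply: commutantS C1v => x C2x.
have om2_0x : Y om2 0 x = 0 by apply: (C2x om2 _ 0%N) => S _; apply.
apply: commutantS (kernel_zero_mode_sub_commutant HW scU om2_0x).
by move=> u gen_u; apply: gen_u Uom1; case: scU.
Qed.
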